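(* Let $m$ be any distribution over program encodings from which one can sample. Then there is a stochastic dynamical system $U_m$ such that for every task $f$ and every system $A$ that solves $f$ there is a constant $C'_A$ (not depending on the input $x$) with $$\tau_{U_m}(x\downarrow y)\le C'_A\,2^{-\log m(A)}\,\tau_A(x\downarrow y)$$ for all inputs $x$, where $y$ is the output of $A$ on $x$. In particular, $U_m$ is a universal solver with constant $C_A=C'_A2^{-\log m(A)}$.
   Context: A stochastic dynamical system $\nu$ has transition probabilities $\nu(s_{t+1}\mid s_t)$ on a state space $\mathcal{S}$, terminating states $\mathcal{F}\subset\mathcal{S}$, an encoding $\mathrm{enc}$ of inputs into states and a decoding $\mathrm{dec}$ of terminating states into outputs. For a trajectory $h=(s_1,\dots,s_n)$, $T(h)=n$ and $\nu(h\mid x)=\prod_{t}\nu(s_{t+1}\mid s_t)$ when $s_1=\mathrm{enc}(x)$; $h\downarrow y$ means the last state is terminating and decodes to $y$. The proper time is $\tau_\nu(x\downarrow y)=\min_{h_1=\mathrm{enc}(x),\,h\downarrow y}T(h)/\nu(h\mid x)$ ($\infty$ if no such $h$). A task is a computable function $f:X\times Y\to\{0,1\}$; $y$ is a witness of $x$ if $f(x,y)=1$. A system $A$ solves $f$ if for all $x$ (having a witness) $A$ terminates from $x$ with some $y$ such that $f(x,y)=1$. A system $U$ is a universal solver if for every task $f$ and every system $A$ solving $f$ there is a constant $C_A$, depending only on $A$, with $\tau_U(x\downarrow y)\le C_A\tau_A(x\downarrow y)$ for all $x$ (the solver may be given oracle access to $f$). $m(A)$ denotes the probability that $m$ assigns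 to an encoding of $A$; logarithms are base 2. *)

From HB Require Import structures.
From mathcomp Require Import all_boot all_order all_algebra.
From mathcomp Require Import all_classical all_reals all_analysis.
Set Implicit Arguments. Unset Strict Implicit. Unset Printing Implicit Defensive.
Import Order.TTheory GRing.Theory Num.Theory.
Local Open Scope classical_set_scope.
Local Open Scope ring_scope.

(* A stochastic dynamical system with inputs X and outputs Y:
   state space St, transition probabilities trans s s' = nu(s' | s)
   (a probability distribution over St for every s), terminating states
   term, encoding enc of inputs and decoding dec of (terminating) states. *)
Record system (R : realType) (X : Type) (Y : Type) := System {
  St : choiceType;
  trans : St -> St -> R;
  trans_ge0 : forall s s', 0 <= trans s s';
  trans_sum1 : forall s, (esum [set: St] (fun s' => (trans s s')%:E) = 1)%E;
  term : St -> bool;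
  enc : X -> St;
  dec : St -> Y
}.

Arguments St {R X Y} A : rename.
Arguments trans {R X Y} A _ _ : rename.
Arguments term {R X Y} A _ : rename.
Arguments enc {R X Y} A _ : rename.
Arguments dec {R X Y} A _ : rename.

Section Defs.
Context (R : realType) (X Y : Type).

Fixpoint path_prob (A : system R X Y) (s : St A) (h : seq (St A)) : R :=
  if h is s' :: h' then trans A s s' * path_prob s' h' else 1.

(* proper time tau_A(x ↓ y): infimum (= minimum when it exists) of
   T(h)/nu(h | x) over trajectories h = enc x :: rest whose last state is
   terminating and decodes to y; trajectories of probability 0 contribute
   T/0 = +oo, and the infimum of the empty set is +oo. *)
Definition proper_time (A : system R X Y) (x : X) (y : Y) : \bar R :=
  ereal_inf [set ((size rest).+1%:R / path_prob (enc A x) rest)%:E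
            | rest in [set rest : seq (St A) |
                 0 < path_prob (enc A x) rest /\
                 term A (last (enc A x) rest) /\
                 dec A (last (enc A x) rest) = y]].

(* A solves the task f: from every input having a witness, A terminates
   (with positive probability, i.e. finite proper time) with a witness. *)
Definition solves (f : X -> Y -> bool) (A : system R X Y) : Prop :=
  forall x, (exists y, f x y) ->
    exists y, f x y /\ (proper_time A x y < +oo)%E.

End Defs.

Definition log2 (R : realType) (a : R) : R := ln a / ln 2.

From HB Require Import structures.
From mathcomp Require Import all_boot all_order all_algebra.
From mathcomp Require Import all_classical all_reals all_analysis.
From mathcomp Require Import ring zify.
Import Order.TTheory GRing.Theory Num.Theory.
Local Open Scope classical_set_scope.
Local Open Scope ring_scope.

(* U_m starts on the raw input x, guesses a program p with probability m p by
   jumping to the initial state of p on x, and from then on simulates p step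
   by step.  A terminating trajectory h of p thus lifts to one of U_m that is
   one step longer and m p times less likely, so T/nu grows at most by the
   factor 2 / m p = 2 * 2^(-log m p). *)

Lemma esum_inj_support {R : realType} {T T' : choiceType} (e : T -> T')
    (F : T' -> \bar R) :
  injective e -> (forall t', ~ range e t' -> F t' = 0%E) ->
  (\esum_(t' in [set: T']) F t' = \esum_(t in [set: T]) F (e t))%E.
Proof.
move=> e_inj F0.
rewrite -(esum_image setT e F); last by move=> a b _ _; apply: e_inj.
rewrite [RHS]esum_mkcond; apply: eq_esum => t' _.
by case: ifPn => // /negP t'N; apply: F0 => t'e; apply: t'N; rewrite inE.
Qed.

Lemma inhabited_esum_eq1 {R : realType} {T : choiceType} {F : T -> \bar R} :
  (\esum_(t in [set: T]) F t = 1)%E -> inhabited T.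
Proof.
case: (pselect (inhabited T)) => // Tempty.
have -> : [set: T] = set0 by apply/seteqP; split => // t _; apply: Tempty.
by rewrite esum_set0 => /esym/eqP; rewrite eqe oner_eq0.
Qed.

Lemma powR2_Nlog2 {R : realType} (a : R) : 0 < a -> 2 `^ (- log2 a) = a^-1.
Proof.
move=> a_gt0.
have ln2_neq0 : ln (2 : R) != 0 by rewrite gt_eqF // ln_gt0 // ltr1n.
apply: ln_inj; rewrite ?posrE ?powR_gt0 ?invr_gt0 //.
by rewrite ln_powR lnV ?posrE // /log2 mulNr divfK.
Qed.

Section UniversalSystem.
Context (R : realType) (X : choiceType) (Y : Type) (Code : choiceType)
  (sys : Code -> system R X Y) (m : Code -> R)
  (m_ge0 : forall p, 0 <= m p)
  (m_sum1 : (\esum_(p in [set: Code]) (m p)%:E = 1)%E) (p0 : Code).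

Definition univ_state : choiceType := (X + {p : Code & St (sys p)})%type.

Definition embed {p} (s : St (sys p)) : univ_state :=
  inr (Tagged (fun q => St (sys q)) s).

Lemma embed_inj p : injective (@embed p).
Proof.
move=> s t [/(congr1 (tagged_as (Tagged (fun q => St (sys q)) s)))].
by rewrite !tagged_asE.
Qed.

Definition univ_trans (a b : univ_state) : R :=
  match a, b with
  | inl x, inr v => m (tag v) * (tagged v == enc (sys (tag v)) x)%:R
  | inr u, inr v =>
      if tag v == tag u then trans (sys (tag u)) (tagged u) (tagged_as u v)
      else 0
  | _, _ => 0
  end.

Lemma univ_trans_input x q : univ_trans (inl x) (embed (enc (sys q) x)) = m q.
Proof. by rewrite /= eqxx mulr1. Qed.

Lemma univ_trans_embed p (s t : St (sys p)) :
  univ_trans (embed s) (embed t) = trans (sys p) s t.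
Proof. by rewrite /= eqxx tagged_asE. Qed.

Lemma univ_trans_ge0 a b : 0 <= univ_trans a b.
Proof.
case: a => [x|u]; case: b => [x'|v] //=; first by rewrite mulr_ge0.
by case: ifP => // _; apply: trans_ge0.
Qed.

Lemma univ_trans_sum1 a :
  (\esum_(b in [set: univ_state]) (univ_trans a b)%:E = 1)%E.
Proof.
case: a => [x|[p s]].
  rewrite (esum_inj_support (fun q => embed (enc (sys q) x))).
  - by rewrite -m_sum1; apply: eq_esum => q _; rewrite univ_trans_input.
  - by move=> q q' [].
  case=> [x'|[q t]] //= t_out.
  case: eqP => [t_enc|]; last by rewrite mulr0.
  by exfalso; apply: t_out; exists q => //; rewrite /embed t_enc.
rewrite (esum_inj_support (@embed p)); last 2 first.
- exact: embed_inj.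
- case=> [x'|[q t]] //= t_out.
  by case: eqP => // q_eq; exfalso; apply: t_out; subst q; exists t.
by rewrite -(trans_sum1 s); apply: eq_esum => t _; rewrite univ_trans_embed.
Qed.

Definition univ_term (b : univ_state) : bool :=
  if b is inr u then term (sys (tag u)) (tagged u) else false.

(* Raw inputs are never terminating, so their decoding is irrelevant; any
   value of type Y will do, and p0 supplies one. *)
Definition univ_dec (b : univ_state) : Y :=
  match b with
  | inl x => dec (sys p0) (enc (sys p0) x)
  | inr u => dec (sys (tag u)) (tagged u)
  end.

Definition univ : system R X Y :=
  @System R X Y univ_state univ_trans univ_trans_ge0 univ_trans_sum1
    univ_term inl univ_dec.

Lemma path_prob_embed p (s : St (sys p)) (rest : seq (St (sys p))) :
  path_prob (A := univ) (embed s) (map (@embed p) rest) = path_prob s rest.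
Proof.
elim: rest s => [|t rest IH] s //.
by congr (_ * _); [exact: univ_trans_embed | exact: IH].
Qed.

Lemma proper_time_univ_le p x y : 0 < m p ->
  (proper_time univ x y <= (2 / m p)%:E * proper_time (sys p) x y)%E.
Proof.
move=> mp_gt0; have c_gt0 : 0 < 2 / m p by rewrite divr_gt0.
rewrite /proper_time -ereal_inf_pZl //.
apply: le_ereal_inf_tmp => _ [_ [rest [rest_pos [rest_term rest_dec]] <-] <-].
apply: ge_ereal_inf.
set s := enc (sys p) x; set q := path_prob s rest in rest_pos *.
set restU := embed s :: map (@embed p) rest.
have restU_prob : path_prob (A := univ) (enc univ x) restU = m p * q.
  by rewrite /q -path_prob_embed -(univ_trans_input x p).
have restU_last : last (enc univ x) restU = embed (last s rest).
  by rewrite /= last_map.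
exists ((size restU).+1%:R / (m p * q))%:E.
  exists restU; last by rewrite restU_prob.
  by split; rewrite ?restU_prob ?restU_last ?mulr_gt0.
rewrite -EFinM lee_fin /= size_map.
have -> : 2 / m p * ((size rest).+1%:R / q) = (2 * (size rest).+1%:R) / (m p * q).
  by field; rewrite !gt_eqF.
apply: ler_wpM2r; first by rewrite invr_ge0 ltW // mulr_gt0.
by rewrite -natrM ler_nat; lia.
Qed.

End UniversalSystem.

Arguments univ {R X Y Code} sys {m}.
Arguments proper_time_univ_le {R X Y Code} sys {m}.

Theorem mainTheorem3 (R : realType) (X : choiceType) (Y : Type)
    (Code : choiceType) (sys : Code -> system R X Y) (m : Code -> R)
    (m_ge0 : forall p, 0 <= m p)
    (m_sum1 : (esum [set: Code] (fun p => (m p)%:E) = 1)%E) :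
  exists U : system R X Y,
    forall (f : X -> Y -> bool) (p : Code),
      solves f (sys p) -> 0 < m p ->
      exists C : R, 0 < C /\
        forall (x : X) (y : Y), f x y ->
          (proper_time U x y
             <= (C * (2 `^ (- log2 (m p))))%:E * proper_time (sys p) x y)%E.
Proof.
case: (inhabited_esum_eq1 m_sum1) => p0.
exists (univ sys m_ge0 m_sum1 p0) => f p _ mp_gt0.
exists 2; split => // x y _.
rewrite powR2_Nlog2 //.
exact: (proper_time_univ_le sys m_ge0 m_sum1 p0 p x y mp_gt0).
Qed.
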